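(* Let $R$ be a commutative unital ring which is Noetherian and quasi-Euclidean, and let $M$ be a finitely generated $R$-module whose minimal number of generators is $\mathrm{rk}_R(M)$. Then for every integer $n > \mathrm{rk}_R(M)$, the action of $\mathrm{E}_n(R)$ on $\mathrm{Um}_n(M)$ by matrix right-multiplication is transitive.
   Context: A ring $R$ is quasi-Euclidean if for every $n \ge 2$ and every $\mathbf{r} = (r_1,\dots,r_n) \in R^n$ there exist $E \in \mathrm{E}_n(R)$ and $d \in R$ with $(d,0,\dots,0) = \mathbf{r}E$. $\mathrm{E}_n(R)$ is the subgroup of $\mathrm{GL}_n(R)$ generated by the elementary matrices (matrices differing from the identity in a single off-diagonal entry). $\mathrm{Um}_n(M)$ is the set of $\mathbf{m}=(m_1,\dots,m_n)\in M^n$ whose components generate $M$, and a matrix $A$ acts by $(\mathbf{m}A)_j = \sum_i m_i A_{ij}$. *)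

From HB Require Import structures.
From mathcomp Require Import all_boot all_order all_algebra.
Set Implicit Arguments. Unset Strict Implicit. Unset Printing Implicit Defensive.
Import Order.TTheory GRing.Theory Num.Theory.
Local Open Scope ring_scope.

Definition is_ideal (R : comPzRingType) (I : R -> Prop) : Prop :=
  I 0 /\ (forall x y, I x -> I y -> I (x + y)) /\ (forall a x, I x -> I (a * x)).

Definition noetherian (R : comPzRingType) : Prop :=
  forall I : nat -> R -> Prop,
    (forall k, is_ideal (I k)) ->
    (forall k x, I k x -> I k.+1 x) ->
    exists N, forall k, (N <= k)%N -> forall x, I k x <-> I N x.

Definition elementary (R : comPzRingType) (n : nat) (A : 'M[R]_n) : Prop :=
  exists (i j : 'I_n) (c : R), i != j /\ A = 1%:M + c *: delta_mx i j.

(* E_n(R): the subgroup of GL_n(R) generated by elementary matrices.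
   Since the inverse of an elementary matrix is elementary, this is the
   set of finite products of elementary matrices (including the empty one). *)
Inductive En (R : comPzRingType) (n : nat) : 'M[R]_n -> Prop :=
| En_id : En 1%:M
| En_mul : forall A e, En A -> elementary e -> En (A *m e).

Definition quasi_euclidean (R : comPzRingType) : Prop :=
  forall (n : nat), (2 <= n)%N -> forall r : 'rV[R]_n,
    exists E : 'M[R]_n, exists d : R,
      En E /\ r *m E = \row_(j < n) (if val j == 0%N then d else 0).

Definition mact (R : comPzRingType) (M : lmodType R) (n : nat)
  (m : 'I_n -> M) (A : 'M[R]_n) : 'I_n -> M :=
  fun j => \sum_(i < n) A i j *: m i.

Definition generates (R : comPzRingType) (M : lmodType R) (n : nat)
  (m : 'I_n -> M) : Prop :=
  forall x : M, exists c : 'I_n -> R, x = \sum_(i < n) c i *: m i.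

Definition Um (R : comPzRingType) (M : lmodType R) (n : nat) (m : 'I_n -> M) : Prop :=
  generates m.

Definition is_rk (R : comPzRingType) (M : lmodType R) (k : nat) : Prop :=
  (exists g : 'I_k -> M, generates g) /\
  (forall k' (g : 'I_k' -> M), generates g -> (k <= k')%N).

(* Fix generators g_0, ..., g_{r-1} of M; it suffices to move every unimodular n-tuple by
   elementary transvections to (g_0, ..., g_{r-1}, 0, ..., 0).  Suppose the first k entries
   are already g_0, ..., g_{k-1} and the other n - k entries lie in the span of
   g_k, ..., g_{r-1}.  Applying quasi-Euclideanity to the coefficients of one generator in
   these entries concentrates them in a single entry; setting that entry aside and repeating
   with the next generator, n - k > r - k eventually yields a zero entry.  Move it to
   position k, fill it with g_k (possible since the tuple generates M), and subtract
   multiples of it from the later entries to remove their g_k-coefficients. *)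

From mathcomp Require Import all_boot all_order all_algebra zify.
From Stdlib Require Import FunctionalExtensionality.
Set Implicit Arguments. Unset Strict Implicit. Unset Printing Implicit Defensive.
Import Order.TTheory GRing.Theory Num.Theory.
Local Open Scope ring_scope.

Definition upd (T : Type) (n : nat) (v : 'I_n -> T) (z : 'I_n) (x : T) : 'I_n -> T :=
  fun y => if y == z then x else v y.

Lemma upd_same (T : Type) (n : nat) (v : 'I_n -> T) z : upd v z (v z) = v.
Proof. by apply: functional_extensionality => y; rewrite /upd; case: eqP => [->|]. Qed.

Lemma upd_upd (T : Type) (n : nat) (v : 'I_n -> T) z x y : upd (upd v z x) z y = upd v z y.
Proof. by apply: functional_extensionality => t; rewrite /upd; case: eqP. Qed.

Lemma card_ord_from r k : #|[set l : 'I_r | (k <= l)%N]| = (r - k)%N.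
Proof.
rewrite cardsE -sum1_card.
have := @big_geq_mkord _ 0%N addn k r xpredT (fun _ => 1%N).
by rewrite /= => <-; rewrite sum_nat_const_nat muln1.
Qed.

Lemma En_mulmx (R : comPzRingType) (n : nat) (A B : 'M[R]_n) :
  En A -> En B -> En (A *m B).
Proof.
move=> EnA; elim=> [|B' e _ EnAB' el_e]; first by rewrite mulmx1.
by rewrite mulmxA; apply: En_mul.
Qed.

Lemma En_elementary (R : comPzRingType) (n : nat) (i j : 'I_n) (c : R) :
  i != j -> En (1%:M + c *: delta_mx i j).
Proof.
by move=> ij; rewrite -[_ + _]mul1mx; apply: En_mul; [apply: En_id | exists i, j, c].
Qed.

Section MatrixAction.
Variables (R : comPzRingType) (M : lmodType R) (n : nat).
Implicit Types (v : 'I_n -> M) (E : 'M[R]_n).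

Lemma mact1 v : mact v 1%:M = v.
Proof.
apply: functional_extensionality => j; rewrite /mact (bigD1 j) //= big1 ?addr0.
  by rewrite mxE eqxx scale1r.
by move=> i ij; rewrite mxE (negbTE ij) mulr0n scale0r.
Qed.

Lemma mact_mulmx v (A B : 'M[R]_n) : mact v (A *m B) = mact (mact v A) B.
Proof.
apply: functional_extensionality => j; rewrite /mact.
under eq_bigr do rewrite mxE scaler_suml.
rewrite exchange_big /=; apply: eq_bigr => l _.
by rewrite scaler_sumr; apply: eq_bigr => i _; rewrite scalerA mulrC.
Qed.

Lemma generates_mact v E : generates (mact v E) -> generates v.
Proof.
move=> gen x; have [c ->] := gen x; exists (fun i => \sum_l c l * E i l).
rewrite /mact; under eq_bigr do rewrite scaler_sumr.
rewrite exchange_big /=; apply: eq_bigr => i _.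
by rewrite scaler_suml; apply: eq_bigr => l _; rewrite scalerA.
Qed.

Definition transvect v (i j : 'I_n) (c : R) : 'I_n -> M := upd v j (v j + c *: v i).

Lemma mact_elementary v i j c : i != j ->
  mact v (1%:M + c *: delta_mx i j) = transvect v i j c.
Proof.
move=> ij; apply: functional_extensionality => m.
rewrite /mact /transvect /upd; under eq_bigr do rewrite mxE scalerDl.
rewrite big_split /= -/(mact v 1%:M m) mact1; case: eqP => [->|/eqP mj].
  congr (_ + _); rewrite (bigD1 i) //= big1 ?addr0; first by rewrite !mxE !eqxx mulr1.
  by move=> l li; rewrite !mxE (negbTE li) mulr0 scale0r.
by rewrite big1 ?addr0 // => l _; rewrite !mxE (negbTE mj) andbF mulr0 scale0r.
Qed.

Lemma transvectK v i j c : i != j -> transvect (transvect v i j c) i j (- c) = v.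
Proof.
move=> ij; apply: functional_extensionality => y.
rewrite /transvect /upd eqxx (negbTE ij).
by case: eqP => [->|//]; rewrite scaleNr addrK.
Qed.

End MatrixAction.

Section Reachability.
Variables (R : comPzRingType) (M : lmodType R) (n : nat).
Implicit Types (u v w : 'I_n -> M) (E : 'M[R]_n).

Inductive reachable : ('I_n -> M) -> ('I_n -> M) -> Prop :=
| reachable_refl v : reachable v v
| reachable_step v w i j c : i != j -> reachable (transvect v i j c) w -> reachable v w.

Lemma reachable_trans u v w : reachable u v -> reachable v w -> reachable u w.
Proof.
by elim=> [//|u' w' i j c ij _ IH] vw; apply: (reachable_step ij); apply: IH.
Qed.

Lemma reachable_transvect v i j c : i != j -> reachable v (transvect v i j c).
Proof. by move=> ij; apply: (reachable_step ij); apply: reachable_refl. Qed.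

Lemma reachable_sym v w : reachable v w -> reachable w v.
Proof.
elim=> [v'|v' w' i j c ij _ IH]; first exact: reachable_refl.
apply: (reachable_trans IH); rewrite -{2}(transvectK v' c ij).
exact: reachable_transvect.
Qed.

Lemma reachable_En v w : reachable v w -> exists2 E, En E & mact v E = w.
Proof.
elim=> [v'|v' w' i j c ij _ [E EnE <-]]; first by exists 1%:M; [apply: En_id | apply: mact1].
exists ((1%:M + c *: delta_mx i j) *m E); first exact: En_mulmx (En_elementary c ij) EnE.
by rewrite mact_mulmx mact_elementary.
Qed.

Lemma generates_reachable v w : generates v -> reachable v w -> generates w.
Proof.
move=> gen /reachable_sym /reachable_En [E _ vE].
by apply: (generates_mact (E := E)); rewrite vE.
Qed.

Lemma reachable_add_combination v z (c : 'I_n -> R) (s : seq 'I_n) : z \notin s ->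
  reachable v (upd v z (v z + \sum_(i <- s) c i *: v i)).
Proof.
elim: s => [|i s IH]; first by rewrite big_nil addr0 upd_same => _; apply: reachable_refl.
rewrite in_cons negb_or => /andP [zi zs]; apply: (reachable_trans (IH zs)).
have iz : i != z by rewrite eq_sym.
have -> : upd v z (v z + \sum_(j <- i :: s) c j *: v j) =
    transvect (upd v z (v z + \sum_(j <- s) c j *: v j)) i z (c i).
  apply: functional_extensionality => y; rewrite /transvect /upd big_cons eqxx (negbTE iz).
  by case: eqP => // _; rewrite [c i *: _ + _]addrC addrA.
exact: reachable_transvect.
Qed.

Lemma reachable_fill_zero v z x : generates v -> v z = 0 -> reachable v (upd v z x).
Proof.
move=> gen vz0; have [c ->] := gen x.
have zs : z \notin [seq i <- enum 'I_n | i != z] by rewrite mem_filter eqxx.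
have := reachable_add_combination v c zs.
rewrite big_filter big_enum_cond /=.
by rewrite [\sum_(i < n) _](bigD1 z) //= vz0 scaler0.
Qed.

Lemma reachable_add_multiples v z (d : 'I_n -> R) (s : seq 'I_n) : z \notin s -> uniq s ->
  reachable v (fun y => if y \in s then v y + d y *: v z else v y).
Proof.
elim: s => [|i s IH]; first by move=> _ _; apply: reachable_refl.
rewrite in_cons negb_or => /andP [zi zs] /= /andP [is_ us].
apply: (reachable_trans (IH zs us)).
have -> : (fun y => if y \in i :: s then v y + d y *: v z else v y) =
    transvect (fun y => if y \in s then v y + d y *: v z else v y) z i (d i).
  apply: functional_extensionality => y.
  by rewrite /transvect /upd in_cons (negbTE is_) (negbTE zs); case: eqP => [->|].
exact: reachable_transvect.
Qed.

Lemma reachable_move_zero v z k : v z = 0 -> reachable v (upd (upd v z (v k)) k 0).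
Proof.
move=> vz0; have [<-|zk] := eqVneq z k.
  by rewrite upd_upd -vz0 upd_same; apply: reachable_refl.
have -> : upd (upd v z (v k)) k 0 = transvect (transvect v k z 1) z k (- 1).
  apply: functional_extensionality => y.
  have kz : (k == z) = false by rewrite eq_sym (negbTE zk).
  by rewrite /transvect /upd eqxx kz vz0 add0r scale1r scaleN1r subrr.
apply: (reachable_trans (reachable_transvect v 1 _)); last exact: reachable_transvect.
by rewrite eq_sym.
Qed.

Definition mact_on (q : nat) (f : 'I_q -> 'I_n) v (B : 'M[R]_q) : 'I_n -> M :=
  fun y => if [pick j | f j == y] is Some j then mact (v \o f) B j else v y.

Lemma mact_on_in q (f : 'I_q -> 'I_n) v (B : 'M[R]_q) j : injective f ->
  mact_on f v B (f j) = mact (v \o f) B j.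
Proof.
move=> f_inj; rewrite /mact_on; case: pickP => [j' /eqP /f_inj -> //|nf].
by have := nf j; rewrite eqxx.
Qed.

Lemma mact_on_out q (f : 'I_q -> 'I_n) v (B : 'M[R]_q) y : (forall j, f j != y) ->
  mact_on f v B y = v y.
Proof. by move=> nf; rewrite /mact_on; case: pickP => [j fj|//]; have := nf j; rewrite fj. Qed.

Lemma reachable_mact_on q (f : 'I_q -> 'I_n) v (B : 'M[R]_q) : injective f -> En B ->
  reachable v (mact_on f v B).
Proof.
move=> f_inj; elim=> [|A e _ IH [i [j [c [ij ->]]]]].
  have -> : mact_on f v 1%:M = v; last exact: reachable_refl.
  apply: functional_extensionality => y; case: (pickP (fun j => f j == y)) => [j /eqP <-|nf].
    by rewrite mact_on_in // mact1.
  by rewrite mact_on_out // => j; rewrite nf.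
apply: (reachable_trans IH).
have -> : mact_on f v (A *m (1%:M + c *: delta_mx i j)) = transvect (mact_on f v A) (f i) (f j) c.
  apply: functional_extensionality => y; case: (pickP (fun j => f j == y)) => [m /eqP <-|nf].
    rewrite mact_on_in // mact_mulmx mact_elementary // /transvect /upd (inj_eq f_inj).
    by rewrite !mact_on_in.
  rewrite /transvect /upd; case: eqP => [yfj|_]; first by have := nf j; rewrite yfj eqxx.
  by rewrite !mact_on_out // => j'; rewrite nf.
by apply: reachable_transvect; rewrite (inj_eq f_inj).
Qed.

Definition in_span (r : nat) (g : 'I_r -> M) (S : {set 'I_r}) (x : M) : Prop :=
  exists c : 'I_r -> R, x = \sum_(l in S) c l *: g l.

Lemma in_span_subset r (g : 'I_r -> M) (S S' : {set 'I_r}) x : S \subset S' ->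
  in_span g S x -> in_span g S' x.
Proof.
move=> sSS' [c ->]; exists (fun l => if l \in S then c l else 0).
rewrite [in RHS](big_setID S) /= (setIidPr sSS') [X in _ = _ + X]big1 ?addr0.
  by apply: eq_bigr => l ->.
by move=> l; rewrite inE => /andP [/negbTE -> _]; rewrite scale0r.
Qed.

Lemma reachable_eliminate_generator r (g : 'I_r -> M) (S : {set 'I_r}) l0 (T : {set 'I_n}) v :
  quasi_euclidean R -> l0 \in S -> (1 < #|T|)%N -> {in T, forall j, in_span g S (v j)} ->
  exists w t0, [/\ reachable v w, forall y, y \notin T -> w y = v y, t0 \in T,
    in_span g S (w t0) & {in T :\ t0, forall j, in_span g (S :\ l0) (w j)}].
Proof.
move=> qe l0S T2 vT; set q := #|T|.
pose f (i : 'I_q) : 'I_n := enum_val i.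
have f_inj : injective f := enum_val_inj.
have fT i : f i \in T := enum_valP i.
have [C vC] : exists C : 'I_q -> 'I_r -> R, forall i, v (f i) = \sum_(l in S) C i l *: g l.
  apply: (@fin_all_exists _ (fun _ => 'I_r -> R)
    (fun i (c : 'I_r -> R) => v (f i) = \sum_(l in S) c l *: g l)) => i.
  exact: vT.
have [B [d [EnB Bd]]] := qe q T2 (\row_i C i l0).
pose w := mact_on f v B; pose i0 : 'I_q := Ordinal (ltnW T2).
have wf i : w (f i) = \sum_(l in S) (\sum_i' B i' i * C i' l) *: g l.
  rewrite /w mact_on_in // /mact; under eq_bigr do rewrite /= vC scaler_sumr.
  rewrite exchange_big /=; apply: eq_bigr => l _; rewrite scaler_suml.
  by apply: eq_bigr => i' _; rewrite scalerA.
exists w, (f i0); split; first exact: reachable_mact_on.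
- by move=> y yT; rewrite /w mact_on_out // => i; apply: contraNneq yT => <-.
- exact: fT.
- by rewrite wf; eexists.
move=> j; rewrite in_setD1 => /andP [jfi0 jT].
have -> : j = f (enum_rank_in (fT i0) j) by rewrite /f enum_rankK_in.
set i := enum_rank_in _ j.
have ii0 : val i != 0%N.
  apply: contra jfi0 => /eqP i_0; have -> : i0 = i by apply: val_inj; rewrite /= i_0.
  by rewrite /i /f enum_rankK_in.
have Cl0 : \sum_i' B i' i * C i' l0 = 0.
  transitivity ((\row_i C i l0 *m B) 0 i); last by rewrite Bd mxE (negbTE ii0).
  by rewrite mxE; apply: eq_bigr => i' _; rewrite mxE mulrC.
exists (fun l => \sum_i' B i' i * C i' l); rewrite wf (bigD1 l0) //= Cl0 scale0r add0r.
by apply: eq_bigl => l; rewrite in_setD1 andbC.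
Qed.

Lemma reachable_zero_entry r (g : 'I_r -> M) (S : {set 'I_r}) (T : {set 'I_n}) v :
  quasi_euclidean R -> (#|S| < #|T|)%N -> {in T, forall j, in_span g S (v j)} ->
  exists w, [/\ reachable v w, forall y, y \notin T -> w y = v y,
    {in T, forall j, in_span g S (w j)} & exists2 z, z \in T & w z = 0].
Proof.
move=> qe; have [m] := ubnP #|S|; elim: m S T v => // m IH S T v.
have [-> _ ST vT|[l0 l0S] Sm ST vT] := set_0Vmem S.
  have [z zT] : exists z, z \in T by apply/set0Pn; rewrite -card_gt0 (leq_trans _ ST).
  exists v; split=> //; first exact: reachable_refl.
  by exists z => //; have [c ->] := vT z zT; rewrite big_set0.
have T2 : (1 < #|T|)%N by apply: leq_ltn_trans ST; rewrite card_gt0; apply/set0Pn; exists l0.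
have [w1 [t0 [vw1 w1v t0T w1t0 w1T]]] := reachable_eliminate_generator qe l0S T2 vT.
have ST' : (#|S :\ l0| < #|T :\ t0|)%N by move: ST; rewrite (cardsD1 l0 S) (cardsD1 t0 T) l0S t0T.
have Sm' : (#|S :\ l0| < m)%N by move: Sm; rewrite (cardsD1 l0 S) l0S.
have [w [w1w ww1 wT [z zT wz]]] := IH _ _ _ Sm' ST' w1T.
have sub_T : {subset T :\ t0 <= T} by move=> y /setD1P [].
exists w; split; first exact: reachable_trans vw1 w1w.
- by move=> y yT; rewrite ww1 ?w1v //; apply: contra yT; apply: sub_T.
- move=> j jT; have [-> | jt0] := eqVneq j t0; first by rewrite ww1 // !inE eqxx.
  by apply: in_span_subset (wT j _); [apply: subD1set | rewrite !inE jt0].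
by exists z => //; apply: sub_T.
Qed.

Lemma in_span0 r (g : 'I_r -> M) S : in_span g S 0.
Proof. by exists (fun _ => 0); rewrite big1 // => l _; rewrite scale0r. Qed.

Definition padded r (g : 'I_r -> M) : 'I_n -> M := fun j => oapp g 0 (insub (val j)).

Definition padded_upto r (g : 'I_r -> M) (k : nat) v : Prop :=
  [/\ generates v, forall j : 'I_n, (j < k)%N -> v j = padded g j
    & forall j : 'I_n, (k <= j)%N -> in_span g [set l : 'I_r | (k <= l)%N] (v j)].

Lemma padded_upto_zero r (g : 'I_r -> M) (k : 'I_n) v :
  quasi_euclidean R -> (k < r < n)%N -> padded_upto g k v ->
  exists w, [/\ reachable v w, padded_upto g k w & w k = 0].
Proof.
move=> qe /andP [kr rn] [gen vk vspan].
pose Tk := [set j : 'I_n | (k <= j)%N].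
have card_lt : (#|[set l : 'I_r | (k <= l)%N]| < #|Tk|)%N by rewrite !card_ord_from; lia.
have vTk : {in Tk, forall j, in_span g [set l : 'I_r | (k <= l)%N] (v j)}.
  by move=> j; rewrite inE; apply: vspan.
have [w1 [vw1 w1v w1Tk [z zTk w1z]]] := reachable_zero_entry qe card_lt vTk.
have w1w := reachable_move_zero k w1z.
have vw := reachable_trans vw1 w1w.
exists (upd (upd w1 z (w1 k)) k 0); split=> //; last by rewrite /upd eqxx.
split.
- exact: generates_reachable gen vw.
- move=> j jk; rewrite /upd.
  have jTk : j \notin Tk by rewrite inE -ltnNge.
  have [jz|_] := eqVneq j z; first by move: jTk; rewrite jz zTk.
  by rewrite ifN_eq ?w1v ?vk //; apply: contraTneq jk => ->; rewrite ltnn.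
- move=> j kj; rewrite /upd; case: eqP => _; first exact: in_span0.
  by case: eqP => _; apply: w1Tk; rewrite inE.
Qed.

Lemma padded_upto_succ r (g : 'I_r -> M) (k : 'I_n) v :
  (k < r)%N -> padded_upto g k v -> v k = 0 -> exists w, reachable v w /\ padded_upto g k.+1 w.
Proof.
move=> kr [gen vk vspan] vk0.
pose lk : 'I_r := Ordinal kr; pose v' := upd v k (g lk).
have vv' : reachable v v' := reachable_fill_zero _ gen vk0.
have [D vD] : exists D : 'I_n -> 'I_r -> R, forall j : 'I_n, (k <= j)%N ->
    v j = \sum_(l in [set l : 'I_r | (k <= l)%N]) D j l *: g l.
  apply: (@fin_all_exists 'I_n (fun _ => 'I_r -> R) (fun j c => (k <= j)%N ->
    v j = \sum_(l in [set l : 'I_r | (k <= l)%N]) c l *: g l)) => j.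
  by case: (leqP k j) => [/vspan [c vc]|]; [exists c | exists (fun _ => 0)].
pose s := [seq y : 'I_n <- enum 'I_n | (k < y)%N].
have ks : k \notin s by rewrite mem_filter ltnn.
have s_gt y : (y \in s) = (k < y)%N by rewrite mem_filter mem_enum andbT.
have v'w := reachable_add_multiples v' (fun y => - D y lk) ks (filter_uniq _ (enum_uniq _)).
have vw := reachable_trans vv' v'w.
eexists; split; first exact: vw; split.
- exact: generates_reachable gen vw.
- move=> j; rewrite ltnS leq_eqVlt s_gt /v' /upd => /orP [/eqP/val_inj ->|jk].
    by rewrite ltnn eqxx /padded (insubT (fun l => (l < r)%N) kr).
  by rewrite ltnNge ltnW //= ifN_eq ?vk //; apply: contraTneq jk => ->; rewrite ltnn.
move=> j kj.
rewrite s_gt kj /v' /upd eqxx ifN_eq; last by apply: contraTneq kj => ->; rewrite ltnn.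
rewrite (vD _ (ltnW kj)) (bigD1 lk); last by rewrite inE.
rewrite /= scaleNr addrAC subrr add0r.
by exists (D j); apply: eq_bigl => l; rewrite !inE -val_eqE /=; lia.
Qed.

Lemma reachable_padded_upto r (g : 'I_r -> M) k v : quasi_euclidean R -> generates g ->
  (r < n)%N -> (k <= r)%N -> generates v -> exists w, reachable v w /\ padded_upto g k w.
Proof.
move=> qe gen_g rn; elim: k => [_ gen_v|k IH kr gen_v].
  exists v; split; first exact: reachable_refl.
  split=> // j _; have [c ->] := gen_g (v j).
  by exists c; apply: eq_bigl => l; rewrite inE.
have [w1 [vw1 w1k]] := IH (ltnW kr) gen_v.
pose kn : 'I_n := Ordinal (ltn_trans kr rn).
have krn : (kn < r < n)%N by rewrite kr rn.
have [w2 [w1w2 w2k w2k0]] := padded_upto_zero qe krn w1k.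
have [w [w2w wk]] := padded_upto_succ (k := kn) kr w2k w2k0.
by exists w; split=> //; apply: reachable_trans vw1 (reachable_trans w1w2 w2w).
Qed.

Lemma padded_upto_full r (g : 'I_r -> M) v : padded_upto g r v -> v = padded g.
Proof.
move=> [_ vr vspan]; apply: functional_extensionality => j.
have [jr|rj] := ltnP j r; first exact: vr.
have [c ->] := vspan j rj; rewrite /padded insubF /=; last by rewrite ltnNge rj.
by rewrite big1 // => l; rewrite inE leqNgt ltn_ord.
Qed.

Lemma reachable_padded r (g : 'I_r -> M) v : quasi_euclidean R -> generates g ->
  (r < n)%N -> generates v -> reachable v (padded g).
Proof.
move=> qe gen_g rn gen_v.
by have [w [vw /padded_upto_full <-]] := reachable_padded_upto qe gen_g rn (leqnn r) gen_v.
Qed.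

End Reachability.

Theorem corollaryB (R : comPzRingType) (M : lmodType R) (r : nat)
  (hNoeth : noetherian R) (hQE : quasi_euclidean R) (hrk : is_rk M r)
  (n : nat) (hn : (r < n)%N) :
  forall u v : 'I_n -> M, Um u -> Um v ->
    exists E : 'M[R]_n, En E /\ mact v E = u.
Proof.
move=> u v hu hv; have [[g gen_g] _] := hrk.
have vu := reachable_trans (reachable_padded hQE gen_g hn hv)
  (reachable_sym (reachable_padded hQE gen_g hn hu)).
by have [E EnE vE] := reachable_En vu; exists E.
Qed.
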